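(* Let $n\ge 2$ and let $$A=\begin{bmatrix}0&a_{12}&\mathbf 0^T\\ a_{21}&0&\mathbf y^T\\ \mathbf x&\mathbf 0&R\end{bmatrix}$$ be a real $n\times n$ matrix, where $a_{12},a_{21}\in\mathbb R$ with $a_{12}\neq0$, $\mathbf x,\mathbf y\in\mathbb R^{n-2}$ and $R$ is a real $(n-2)\times(n-2)$ matrix. If $\lambda$ is a simple eigenvalue of $A$ such that $A\mathbf u=\lambda\mathbf u$ and $\mathbf v^TA=\lambda\mathbf v^T$ for some entrywise positive $\mathbf u,\mathbf v\in\mathbb R^n$, then $\lambda$ is a simple eigenvalue of the $(n-1)\times(n-1)$ matrix $$B=\begin{bmatrix}\lambda+a_{21}-\frac{\lambda^2}{a_{12}}&\mathbf y^T\\ \mathbf x&R\end{bmatrix}.$$ Moreover, $B\mathbf w=\lambda\mathbf w$ and $\mathbf z^TB=\lambda\mathbf z^T$, where $w_1=u_1$, $z_1=v_2$, and $w_i=u_{i+1}$, $z_i=v_{i+1}$ for $i\ge 2$.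
   Context: A simple eigenvalue is one of algebraic multiplicity one; $\mathbf 0$ denotes a zero column vector of appropriate size. *)

From mathcomp Require Import all_boot all_order all_algebra.
Set Implicit Arguments. Unset Strict Implicit. Unset Printing Implicit Defensive.
Import Order.TTheory GRing.Theory Num.Theory.
Local Open Scope ring_scope.

Definition simple_eigenvalue (R : fieldType) (n : nat) (A : 'M[R]_n) (l : R) : Prop :=
  mup l (char_poly A) = 1%N.

Definition pos_vec (R : numDomainType) (n : nat) (u : 'cV[R]_n) : Prop :=
  forall i, 0 < u i 0.

From mathcomp Require Import all_boot all_order all_algebra.
From mathcomp Require Import ring.
Set Implicit Arguments. Unset Strict Implicit. Unset Printing Implicit Defensive.
Import Order.TTheory GRing.Theory Num.Theory.
Local Open Scope ring_scope.

(* Let M w = l w and z^T M = l z^T with z^T w <> 0 (for positive eigenvectors,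
   z^T w > 0).  Brauer's rank-one update gives
   (X - l) char(M + w z^T) = char(M) (X - l - z^T w),
   so l is a multiple root of char(M) iff it is an eigenvalue of M + w z^T, iff M
   has an l-eigenvector orthogonal to z; that is, l is simple iff its eigenspace
   is the line through w.
   An l-eigenvector (p, r) of B lifts to the l-eigenvector (p, l p / a12, r) of A,
   the corner entry of B being what is left of the second row of A once that
   coordinate is eliminated.  If l is simple for A, the lift is a multiple of u,
   so (p, r) is the same multiple of w, and l is simple for B. *)

Lemma char_poly_trmx (F : fieldType) n (M : 'M[F]_n) : char_poly M^T = char_poly M.
Proof.
by rewrite /char_poly -det_tr /char_poly_mx linearB /= tr_scalar_mx -map_trmx trmxK.
Qed.

Lemma root_char_polyP (F : fieldType) n (M : 'M[F]_n) l :
  reflect (exists2 q : 'cV_n, q != 0 & M *m q = l *: q) (root (char_poly M) l).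
Proof.
rewrite -char_poly_trmx -eigenvalue_root_char.
apply: (iffP eigenvalueP) => [[q Mq q_neq0] | [q q_neq0 Mq]].
  by exists q^T; rewrite ?trmx_eq0 // -[M]trmxK -trmx_mul Mq linearZ.
by exists q^T; rewrite ?trmx_eq0 // -trmx_mul Mq linearZ.
Qed.

Section RankOneUpdate.

Variables (F : fieldType) (n : nat) (M : 'M[F]_n) (l : F) (w z : 'cV[F]_n).
Hypothesis Mw : M *m w = l *: w.

Lemma char_poly_add_rank1 :
  ('X - l%:P) * char_poly (M + w *m z^T) =
  char_poly M * ('X - (l + (z^T *m w) 0 0)%:P).
Proof.
set X := char_poly_mx M; set W := map_mx polyC w; set Z := map_mx polyC z.
set s := 'X - l%:P.
have XW : X *m W = s *: W.
  by rewrite /X /char_poly_mx mulmxBl mul_scalar_mx -map_mxM Mw map_mxZ /= scalerBl.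
have XWZ : char_poly_mx (M + w *m z^T) = X - W *m Z^T.
  by rewrite /char_poly_mx map_mxD map_mxM -map_trmx opprD addrA.
have ZW : Z^T *m W = ((z^T *m w) 0 0)%:P%:M.
  by rewrite map_trmx -map_mxM {1}[_ *m w]mx11_scalar map_scalar_mx.
(* Two factorisations of the bordered matrix [1, Z^T; W, X]. *)
set N := block_mx (1%:M : 'M_1) Z^T W X.
have detN : \det N = \det (X - W *m Z^T).
  have -> : N = block_mx 1%:M 0 W 1%:M *m block_mx 1%:M Z^T 0 (X - W *m Z^T).
    by rewrite mulmx_block !mul1mx !mulmx1 ?mul0mx ?mulmx0 ?addr0 ?add0r addrC subrK.
  by rewrite det_mulmx det_lblock det_ublock !det1 !mul1r.
have NE : N *m block_mx (s%:M : 'M_1) 0 (- W) 1%:M = block_mx (s%:M - Z^T *m W) Z^T 0 X.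
  by rewrite mulmx_block !mul1mx !mulmx1 ?mulmx0 ?mul0mx ?addr0 ?add0r !mulmxN XW
    mul_mx_scalar subrr.
have := congr1 determinant NE.
rewrite det_mulmx det_lblock det1 mulr1 det_ublock detN -XWZ ZW -raddfB !det_scalar1.
rewrite mulrC /X -!/(char_poly _) => ->.
by rewrite mulrC polyCD opprD addrA.
Qed.

Hypotheses (zM : z^T *m M = l *: z^T) (zw_neq0 : (z^T *m w) 0 0 != 0).

Lemma mup_char_poly_add_rank1 :
  mup l (char_poly M) = (mup l (char_poly (M + w *m z^T))).+1.
Proof.
have l_nroot : ~~ root ('X - (l + (z^T *m w) 0 0)%:P) l.
  by rewrite root_XsubC -subr_eq0 opprD addrA subrr add0r oppr_eq0.
rewrite -(mupMl (char_poly M) l_nroot) -char_poly_add_rank1.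
rewrite mupM ?polyXsubC_eq0 ?monic_neq0 ?char_poly_monic //.
by rewrite (@mup_XsubCX _ 1) eqxx.
Qed.

Lemma eigen_add_rank1 (q : 'cV_n) :
  (M + w *m z^T) *m q = l *: q <-> M *m q = l *: q /\ z^T *m q = 0.
Proof.
split => [Mq | [Mq zq]]; last by rewrite mulmxDl -mulmxA zq mulmx0 addr0.
have zq : z^T *m q = 0.
  have : z^T *m ((M + w *m z^T) *m q) = l *: (z^T *m q) + z^T *m w *m (z^T *m q).
    by rewrite mulmxDl mulmxDr !mulmxA zM -scalemxAl.
  rewrite Mq -scalemxAr -{1}[l *: _]addr0 => /addrI/esym/eqP.
  by rewrite [z^T *m w]mx11_scalar mul_scalar_mx scaler_eq0 (negPf zw_neq0) => /eqP.
by split; rewrite // -Mq mulmxDl -mulmxA zq mulmx0 addr0.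
Qed.

Lemma simple_eigenvalueP :
  simple_eigenvalue M l <-> forall q, M *m q = l *: q -> exists c, q = c *: w.
Proof.
set k := (z^T *m w) 0 0.
have zZ c : z^T *m (c *: w) = (c * k)%:M by rewrite -scalemxAr [_ *m w]mx11_scalar
  scale_scalar_mx.
rewrite /simple_eigenvalue mup_char_poly_add_rank1.
have -> : ((mup l (char_poly (M + w *m z^T))).+1 = 1)%N <->
          ~~ root (char_poly (M + w *m z^T)) l.
  rewrite -dvdp_XsubCl XsubC_dvd ?monic_neq0 ?char_poly_monic // lt0n negbK.
  by split => [[->] | /eqP ->].
split => [/root_char_polyP root_N q Mq | all_eigen].
  exists ((z^T *m q) 0 0 / k); apply/eqP; rewrite -subr_eq0; apply/negPn/negP => q_neq0.
  apply: root_N; exists (q - (z^T *m q) 0 0 / k *: w) => //; apply/eigen_add_rank1.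
  rewrite mulmxBr -scalemxAr Mq Mw scalerBr !scalerA [l * _]mulrC; split => //.
  by rewrite mulmxBr zZ divfK // -mx11_scalar subrr.
apply/negP => /root_char_polyP [q q_neq0 /eigen_add_rank1 [/all_eigen [c qE] zq]].
move: zq; rewrite qE zZ => /(congr1 (fun A : 'M_1 => A 0 0)); rewrite !mxE mulr1n.
move/eqP; rewrite mulf_eq0 (negPf zw_neq0) orbF => /eqP c0.
by move: q_neq0; rewrite qE c0 scale0r eqxx.
Qed.

End RankOneUpdate.

Lemma scalar_mx1_inj (R : nzRingType) : injective (fun a : R => a%:M : 'M_1).
Proof. by move=> a b /(congr1 (fun M : 'M_1 => M 0 0)); rewrite !mxE eqxx !mulr1n. Qed.

Lemma pos_vec_dot_neq0 (R : numDomainType) n (u v : 'cV[R]_n.+1) :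
  pos_vec u -> pos_vec v -> (v^T *m u) 0 0 != 0.
Proof.
move=> pu pv; rewrite mxE psumr_neq0 => [|i _]; last by rewrite mxE mulr_ge0 ?ltW.
by apply/hasP; exists ord0; rewrite ?mem_index_enum //= mxE mulr_gt0.
Qed.

Lemma pos_vec_col_scalar (R : numDomainType) n1 n2 (u : 'cV[R]_(n1 + n2)) i :
  pos_vec u -> pos_vec (col_mx (usubmx u i ord0)%:M (dsubmx u)).
Proof.
by move=> pu j; rewrite mxE; case: splitP => k _; rewrite !mxE ?ord1 ?eqxx ?mulr1n; apply: pu.
Qed.

Lemma cV2_col (F : nzRingType) (c : 'cV[F]_2) :
  c = col_mx (c ord0 ord0)%:M (c ord_max ord0)%:M :> 'cV_(1 + 1).
Proof.
apply/matrixP => i j; rewrite ord1 mxE.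
by case: splitP => k; rewrite (ord1 k) => ik; rewrite !mxE eqxx mulr1n;
  congr (c _ _); apply: val_inj; rewrite /= ik.
Qed.

Section ReducedMatrix.

Context {F : fieldType} {m : nat} {a12 a21 l : F} {x y : 'cV[F]_m} {Rm : 'M[F]_m}.
Hypothesis a12_neq0 : a12 != 0.

Local Notation A := (block_mx
  (\matrix_(i < 2, j < 2) (if i == j then 0 else if i == 0 then a12 else a21))
  (col_mx (0 : 'rV[F]_m) y^T) (row_mx x (0 : 'cV[F]_m)) Rm).
Local Notation beta := (l + a21 - l ^+ 2 / a12).
Local Notation B := (block_mx beta%:M y^T x Rm).

Lemma antidiag_mx2E :
  \matrix_(i < 2, j < 2) (if i == j then 0 else if i == 0 then a12 else a21)
  = block_mx 0 a12%:M a21%:M 0 :> 'M_(1 + 1).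
Proof.
have ord2 (k : 'I_(1 + 1)) : k = lshift 1 ord0 \/ k = rshift 1 ord0.
  by case: (splitP k) => k' kE; [left | right]; apply: val_inj; rewrite /= kE (ord1 k').
apply/matrixP => i j.
by case: (ord2 i) => ->; case: (ord2 j) => ->;
  rewrite ?block_mxEul ?block_mxEur ?block_mxEdl ?block_mxEdr !mxE.
Qed.

Lemma mulmx_A_col a b (r : 'cV_m) :
  A *m col_mx (col_mx a%:M b%:M) r =
  col_mx (col_mx (a12 * b)%:M ((a21 * a)%:M + y^T *m r)) (a *: x + Rm *m r).
Proof.
rewrite antidiag_mx2E mul_block_col (@mul_block_col _ 1 1 1 1 1).
rewrite (@mul_col_mx _ 1 1 m 1) (@mul_row_col _ m 1 1 1) !mul0mx ?add0r ?addr0.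
by rewrite (@add_col_mx _ 1 1 1) ?add0r ?addr0 -!scalar_mxM mul_mx_scalar.
Qed.

Lemma mulmx_B_col a (r : 'cV_m) :
  B *m col_mx a%:M r = col_mx ((beta * a)%:M + y^T *m r) (a *: x + Rm *m r).
Proof. by rewrite mul_block_col -scalar_mxM mul_mx_scalar. Qed.

Lemma trmx_mulmx_A c d (s : 'cV_m) :
  (col_mx (col_mx c%:M d%:M) s)^T *m A =
  row_mx (row_mx ((d * a21)%:M + s^T *m x) (c * a12)%:M) (d *: y^T + s^T *m Rm).
Proof.
rewrite antidiag_mx2E tr_col_mx (@tr_col_mx _ 1 1 1) !tr_scalar_mx mul_row_block.
rewrite (@mul_row_block _ 1 1 1 1 1) (@mul_row_col _ 1 1 1 m) (@mul_mx_row _ 1 m 1 1).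
by rewrite ?mulmx0 ?mul0mx ?add0r ?addr0 (@add_row_mx _ 1 1 1) ?add0r ?addr0
  -!scalar_mxM mul_scalar_mx.
Qed.

Lemma trmx_mulmx_B d (s : 'cV_m) :
  (col_mx d%:M s)^T *m B = row_mx ((d * beta)%:M + s^T *m x) (d *: y^T + s^T *m Rm).
Proof. by rewrite tr_col_mx tr_scalar_mx mul_row_block -scalar_mxM mul_scalar_mx. Qed.

Lemma second_row_reduced_eq {a b} {t : 'M[F]_1} : a12 * b = l * a ->
  (a21 * a)%:M + t = (l * b)%:M <-> (beta * a)%:M + t = (l * a)%:M.
Proof.
move=> ab; have bE : b = l * a / a12 by rewrite -ab [a12 * b]mulrC mulfK.
have shift c e : c%:M + t = e%:M <-> t = (e - c) *: 1%:M.
  by rewrite scalerBl !scalemx1; split => [<- | ->]; rewrite addrC ?addKr ?subrK.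
rewrite !shift; suff -> : l * b - a21 * a = l * a - beta * a by [].
by rewrite bE; field.
Qed.

Lemma A_eigenvectorP a b (r : 'cV_m) :
  A *m col_mx (col_mx a%:M b%:M) r = l *: col_mx (col_mx a%:M b%:M) r <->
  a12 * b = l * a /\ B *m col_mx a%:M r = l *: col_mx a%:M r.
Proof.
rewrite mulmx_A_col mulmx_B_col !scale_col_mx ?(@scale_col_mx _ 1 1 1) !scale_scalar_mx.
split=> [/eq_col_mx [/(@eq_col_mx _ 1 1 1) [/scalar_mx1_inj ab /(second_row_reduced_eq ab) e2] e3]
        | [ab /eq_col_mx [/(second_row_reduced_eq ab) e2 e3]]].
  by rewrite e2 e3.
by rewrite ab e2 e3.
Qed.

Lemma A_left_eigenvectorP c d (s : 'cV_m) :
  (col_mx (col_mx c%:M d%:M) s)^T *m A = l *: (col_mx (col_mx c%:M d%:M) s)^T <->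
  a12 * c = l * d /\ (col_mx d%:M s)^T *m B = l *: (col_mx d%:M s)^T.
Proof.
rewrite trmx_mulmx_A trmx_mulmx_B !tr_col_mx ?(@tr_col_mx _ 1 1 1) !tr_scalar_mx.
rewrite !scale_row_mx ?(@scale_row_mx _ 1 1 1) !scale_scalar_mx [d * a21]mulrC [d * beta]mulrC
  [c * a12]mulrC.
split=> [/eq_row_mx [/(@eq_row_mx _ 1 1 1) [e1 /scalar_mx1_inj cd] e3]
        | [cd /eq_row_mx [/(second_row_reduced_eq cd) e1 e3]]].
  by move/(second_row_reduced_eq cd): e1 => e1; rewrite e1 e3.
by rewrite cd e1 e3.
Qed.

End ReducedMatrix.

Theorem lemma3p13 (R : realFieldType) (m : nat) (a12 a21 : R)
    (x y : 'cV[R]_m) (Rm : 'M[R]_m) (l : R) (u v : 'cV[R]_(2 + m)) :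
  a12 != 0 ->
  let A : 'M[R]_(2 + m) :=
    block_mx (\matrix_(i < 2, j < 2) (if i == j then 0 else if i == 0 then a12 else a21))
             (col_mx (0 : 'rV[R]_m) y^T)
             (row_mx x (0 : 'cV[R]_m))
             Rm in
  let B : 'M[R]_(1 + m) :=
    block_mx (l + a21 - l ^+ 2 / a12)%:M y^T x Rm in
  let w : 'cV[R]_(1 + m) := col_mx ((usubmx u) ord0 ord0)%:M (dsubmx u) in
  let z : 'cV[R]_(1 + m) := col_mx ((usubmx v) ord_max ord0)%:M (dsubmx v) in
  simple_eigenvalue A l ->
  pos_vec u -> pos_vec v ->
  A *m u = l *: u -> v^T *m A = l *: v^T ->
  simple_eigenvalue B l /\ B *m w = l *: w /\ z^T *m B = l *: z^T.
Proof.
move=> a12_neq0 A B w z simA pu pv Au vA.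
have uE : u = col_mx (col_mx (usubmx u ord0 ord0)%:M (usubmx u ord_max ord0)%:M) (dsubmx u).
  by rewrite -cV2_col vsubmxK.
have vE : v = col_mx (col_mx (usubmx v ord0 ord0)%:M (usubmx v ord_max ord0)%:M) (dsubmx v).
  by rewrite -cV2_col vsubmxK.
have := Au; rewrite uE => /(A_eigenvectorP a12_neq0) [_ Bw].
have := vA; rewrite vE => /(A_left_eigenvectorP a12_neq0) [_ zB].
have zw_neq0 : (z^T *m w) 0 0 != 0 by apply: pos_vec_dot_neq0; apply: pos_vec_col_scalar.
have vu_neq0 : (v^T *m u) 0 0 != 0 by apply: pos_vec_dot_neq0.
split; last by split.
apply/(simple_eigenvalueP Bw zB zw_neq0) => q Bq.
have qE : q = col_mx (usubmx q ord0 ord0)%:M (dsubmx q) by rewrite -mx11_scalar vsubmxK.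
set p := usubmx q ord0 ord0 in qE; set r := dsubmx q in qE.
have Aq : A *m col_mx (col_mx p%:M (l * p / a12)%:M) r =
          l *: col_mx (col_mx p%:M (l * p / a12)%:M) r.
  by apply/(A_eigenvectorP a12_neq0); split; [field | rewrite -qE].
have [c] := (simple_eigenvalueP Au vA vu_neq0).1 simA _ Aq.
rewrite {1}uE scale_col_mx (@scale_col_mx _ 1 1 1).
move=> /eq_col_mx [/(@eq_col_mx _ 1 1 1) [pE _] rE].
by exists c; rewrite qE pE rE /w scale_col_mx.
Qed.
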